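(* Let $\delta\in(0,1)$. With probability at least $1-\delta$ over the random draw of the training set $S=(\boldsymbol{x}_1,\dots,\boldsymbol{x}_n)$, every linear classifier $f(\boldsymbol{x})=\langle\boldsymbol{w},\boldsymbol{x}\rangle$ that maximizes the $L^1$-margin $\gamma_1(\boldsymbol{w}):=\min_{i\in[n]}\frac{y_i\langle\boldsymbol{w},\boldsymbol{x}_i\rangle}{\|\boldsymbol{w}\|_1}$ on $S$ satisfies $$\mathbb{E}_{\boldsymbol{x}\sim\mathcal{D}_X}\big[\mathbb{1}[y^*(\boldsymbol{x})f(\boldsymbol{x})\le0]\big]\le4k\sqrt{\frac{2\log(2d)}{n}}+3\sqrt{\frac{\log(2/\delta)}{2n}}.$$
   Context: $\mathcal{D}_X$ is the uniform distribution on $\{\pm1\}^d$. $k$ is a positive odd integer. The vector $\boldsymbol{w}^*\in\mathbb{R}^d$ has its first $k$ coordinates drawn uniformly from $\{\pm1\}^k$ and all other coordinates equal to $0$; the label is $y^*(\boldsymbol{x})=\mathrm{sign}(\langle\boldsymbol{w}^*,\boldsymbol{x}\rangle)$. The training inputs $\boldsymbol{x}_1,\dots,\boldsymbol{x}_n$ are i.i.d. from $\mathcal{D}_X$ and $y_i=y^*(\boldsymbol{x}_i)$. *)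

From HB Require Import structures.
From mathcomp Require Import all_boot all_order all_algebra.
From mathcomp Require Import boolp reals ereal exp.
Set Implicit Arguments. Unset Strict Implicit. Unset Printing Implicit Defensive.
Import Order.TTheory GRing.Theory Num.Theory.
Local Open Scope ring_scope.

(* The hypercube {+-1}^d, a point encoded by its sign pattern (true = +1). *)
Definition cube (d : nat) := {ffun 'I_d -> bool}.

Definition sample (d n : nat) := {ffun 'I_n -> cube d}.

Section Defs.
Variable R : realType.

Definition sgnb (b : bool) : R := if b then 1 else -1.

Definition dot (d : nat) (w : 'I_d -> R) (x : cube d) : R :=
  \sum_(i < d) w i * sgnb (x i).

Definition l1norm (d : nat) (w : 'I_d -> R) : R := \sum_(i < d) `|w i|.

Definition ystar (d : nat) (wstar : 'I_d -> R) (x : cube d) : R :=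
  Num.sg (dot wstar x).

Definition gamma1 (d n : nat) (wstar : 'I_d -> R) (S : sample d n)
    (w : 'I_d -> R) : \bar R :=
  \big[Order.min/+oo%E]_(i < n)
     ((ystar wstar (S i) * dot w (S i) / l1norm w)%:E).

(* w maximizes the L1 margin on S (among nonzero w, where gamma1 is defined) *)
Definition max_l1_margin (d n : nat) (wstar : 'I_d -> R) (S : sample d n)
    (w : 'I_d -> R) : Prop :=
  (exists i, w i != 0) /\
  forall v : 'I_d -> R, (exists i, v i != 0) ->
    (gamma1 wstar S v <= gamma1 wstar S w)%E.

Definition test_error (d : nat) (wstar w : 'I_d -> R) : R :=
  #|[set x : cube d | ystar wstar x * dot w x <= 0]|%:R / #|{: cube d}|%:R.

Definition probS (d n : nat) (E : sample d n -> Prop) : R :=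
  #|[set S : sample d n | `[< E S >]]|%:R / #|{: sample d n}|%:R.

End Defs.

(* The ramp loss t |-> clamp01 (1 - k t) of the normalised margin
   y <w, x> / ||w||_1 dominates the 0-1 error, and it vanishes on the sample for
   every maximiser of the L1 margin: the teacher w* has margin at least 1/k on
   every point, since ||w*||_1 = k while <w*, x> is a sum of k signs, an odd
   integer.  So the test error of a maximiser is at most the uniform deviation
   sup_w (risk - empirical risk) of the ramp loss.  Symmetrisation, the
   Ledoux-Talagrand contraction (the ramp loss is k-Lipschitz) and Massart's
   lemma for the d coordinate functionals (the dual of the L1 ball) bound its
   mean by 4 k sqrt (ln (2d) / n); changing one sample point moves it by at
   most 1/n, so McDiarmid's inequality bounds the deviation from the mean.
   Both exponential-moment bounds rest on e^y <= 1 + y + y^2 for y <= 1. *)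

From HB Require Import structures.
From mathcomp Require Import all_boot all_order all_algebra.
From mathcomp Require Import boolp reals ereal exp.
From mathcomp Require Import classical_sets sequences.
From mathcomp Require Import ring lra.
Set Implicit Arguments. Unset Strict Implicit. Unset Printing Implicit Defensive.
Import Order.TTheory GRing.Theory Num.Theory.
Local Open Scope ring_scope.

Section Supremum.
Variable R : realType.

(* Meaningful only for F bounded above on a nonempty W; a junk value otherwise. *)
Definition supr (W : Type) (F : W -> R) : R := sup (range F).

Lemma supr_ub (W : Type) (F : W -> R) (M : R) (w : W) :
  (forall v, F v <= M) -> F w <= supr F.
Proof.
move=> FM; apply: ub_le_sup; last by exists w.
by exists M => _ [v _ <-]; exact: FM.
Qed.

Lemma supr_ub_fin (I : finType) (F : I -> R) (i : I) : F i <= supr F.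
Proof.
apply: (supr_ub (M := \sum_j `|F j|)) => j; apply: le_trans (ler_norm _) _.
by rewrite (bigD1 j) //= lerDl sumr_ge0.
Qed.

Lemma supr_le (W : Type) (w0 : W) (F : W -> R) (c : R) :
  (forall v, F v <= c) -> supr F <= c.
Proof.
move=> Fc; apply: ge_sup; first by exists (F w0), w0.
by move=> _ [v _ <-]; exact: Fc.
Qed.

Lemma supr_mull_le (W : Type) (w0 : W) (F : W -> R) (c M : R) :
  0 <= c -> (forall w, F w <= M) -> supr (fun w => c * F w) <= c * supr F.
Proof. by move=> c0 FM; apply: (supr_le w0) => w; rewrite ler_wpM2l // (supr_ub w FM). Qed.

Lemma supr_addr_le (W : Type) (w0 : W) (F G : W -> R) (c : R) :
  (forall w w', F w + G w' <= c) -> supr F + supr G <= c.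
Proof.
move=> FGc; suff : supr G <= c - supr F by lra.
apply: (supr_le w0) => w'; suff : supr F <= c - G w' by lra.
by apply: (supr_le w0) => w; have := FGc w w'; lra.
Qed.

End Supremum.

Section ExpQuadraticBound.
Variable R : realType.

Lemma expR_le_of_pow (y p : R) (m : nat) : y <= m.+1%:R ->
  1 <= (1 - y / m.+1%:R) ^+ m.+1 * p -> expR y <= p.
Proof.
move=> ym hp; have m0 : 0 < m.+1%:R :> R by rewrite ltr0n.
have base0 : 0 <= 1 - y / m.+1%:R by rewrite subr_ge0 ler_pdivrMr // mul1r.
have powE : (1 - y / m.+1%:R) ^+ m.+1 <= expR (- y).
  have -> : expR (- y) = expR (- (y / m.+1%:R)) ^+ m.+1.
    by rewrite -expRM_natl mulrN mulrCA divff ?mulr1 // lt0r_neq0.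
  by rewrite lerXn2r ?nnegrE ?expR_ge0 // expR_ge1Dx.
have p0 : 0 <= p.
  rewrite leNgt; apply/negP => /ltW p0.
  by have := le_trans hp (mulr_ge0_le0 (exprn_ge0 _ base0) p0); rewrite ler10.
rewrite -[expR y]mulr1; apply: le_trans (ler_wpM2l (expR_ge0 y) hp) _.
rewrite mulrA -[leRHS]mul1r -[in leRHS](expRxMexpNx_1 y).
by rewrite ler_wpM2r // ler_wpM2l ?expR_ge0.
Qed.

(* From (1 - y / m) ^ m <= e^-y with m = 1 for y <= 0 and m = 8 for 0 <= y <= 1;
   the polynomial inequality left over is closed by nra. *)
Lemma expR_le1DxDsqr (y : R) : y <= 1 -> expR y <= 1 + y + y ^+ 2.
Proof.
move=> y1; have [y0|y0] := leP y 0.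
  apply: (@expR_le_of_pow _ _ 0); first lra.
  rewrite divr1 expr1; nra.
by apply: (@expR_le_of_pow _ _ 7); [lra | nra].
Qed.

End ExpQuadraticBound.

Section Average.
Variable R : realType.

Definition avg (A : finType) (f : A -> R) : R := (\sum_a f a) / #|A|%:R.

Lemma ler_avg (A : finType) (f g : A -> R) :
  (forall a, f a <= g a) -> avg f <= avg g.
Proof.
by move=> fg; rewrite /avg ler_wpM2r ?invr_ge0 ?ler0n // ler_sum.
Qed.

Lemma avgD (A : finType) (f g : A -> R) :
  avg (fun a => f a + g a) = avg f + avg g.
Proof. by rewrite /avg big_split /= mulrDl. Qed.

Lemma avgB (A : finType) (f g : A -> R) :
  avg (fun a => f a - g a) = avg f - avg g.
Proof. by rewrite /avg sumrB mulrBl. Qed.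

Lemma avgZ (A : finType) (c : R) (f : A -> R) :
  avg (fun a => c * f a) = c * avg f.
Proof. by rewrite /avg -mulr_sumr mulrA. Qed.

Lemma avg_cst (A : finType) (c : R) : (0 < #|A|)%N -> avg (fun _ : A => c) = c.
Proof.
by move=> A0; rewrite /avg sumr_const -[c *+ _]mulr_natr mulfK // pnatr_eq0 -lt0n.
Qed.

Lemma avg_sum (A I : finType) (f : I -> A -> R) :
  avg (fun a => \sum_i f i a) = \sum_i avg (f i).
Proof. by rewrite /avg exchange_big /= mulr_suml. Qed.

Lemma reindex_avg (A : finType) (h : A -> A) (f : A -> R) : injective h ->
  avg (fun a => f (h a)) = avg f.
Proof. by move=> h_inj; rewrite /avg [in RHS](reindex_inj h_inj). Qed.

Lemma avg_pair (A B : finType) (f : A -> B -> R) :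
  avg (fun a => avg (fun b => f a b)) = avg (fun p : A * B => f p.1 p.2).
Proof.
rewrite /avg -mulr_suml pair_bigA /= -mulrA card_prod natrM invfM.
by rewrite [_^-1 * _]mulrC.
Qed.

Lemma avg_fst (A B : finType) (g : A -> R) : (0 < #|B|)%N ->
  avg (fun p : A * B => g p.1) = avg g.
Proof.
move=> B0; rewrite -(avg_pair (fun a _ => g a)); congr avg; apply: funext => a.
exact: avg_cst.
Qed.

Lemma avg_snd (A B : finType) (g : B -> R) : (0 < #|A|)%N ->
  avg (fun p : A * B => g p.2) = avg g.
Proof. by move=> A0; rewrite -(avg_pair (fun _ b => g b)) avg_cst. Qed.

Lemma avg_exchange (A B : finType) (f : A -> B -> R) :
  avg (fun a => avg (fun b => f a b)) = avg (fun b => avg (fun a => f a b)).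
Proof.
rewrite /avg -!mulr_suml exchange_big /= -!mulrA.
by rewrite [_^-1 * _]mulrC.
Qed.

Lemma ler_norm_avg (A : finType) (f : A -> R) (c : R) : (0 < #|A|)%N ->
  (forall a, `|f a| <= c) -> `|avg f| <= c.
Proof.
move=> A0 fc; rewrite ler_norml; apply/andP; split.
  by rewrite -(avg_cst (- c) A0); apply: ler_avg => a; have := fc a; rewrite ler_norml => /andP[].
by rewrite -(avg_cst c A0); apply: ler_avg => a; have := fc a; rewrite ler_norml => /andP[].
Qed.

Lemma expR_avg_le (A : finType) (f : A -> R) : (0 < #|A|)%N ->
  expR (avg f) <= avg (fun a => expR (f a)).
Proof.
move=> A0; have tangent a : expR (avg f) * (1 + (f a - avg f)) <= expR (f a).
  by rewrite -[X in _ <= expR X](subrK (avg f)) expRD mulrC ler_wpM2r ?expR_ge0 ?expR_ge1Dx.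
apply: le_trans (ler_avg tangent).
by rewrite avgZ avgD avgB !avg_cst // subrr addr0 mulr1.
Qed.

Lemma avg_expR_centered_le (A : finType) (f : A -> R) (c lam : R) :
  (0 < #|A|)%N -> 0 <= lam -> lam * c <= 1 ->
  (forall a, `|f a - avg f| <= c) ->
  avg (fun a => expR (lam * (f a - avg f))) <= expR (lam ^+ 2 * c ^+ 2).
Proof.
move=> A0 lam0 lamc fc.
have quad a : expR (lam * (f a - avg f)) <=
    1 + lam * (f a - avg f) + lam ^+ 2 * c ^+ 2.
  have lamf : `|lam * (f a - avg f)| <= lam * c.
    by rewrite normrM ger0_norm // ler_wpM2l.
  have y1 : lam * (f a - avg f) <= 1 by apply: le_trans (ler_norm _) (le_trans lamf lamc).
  apply: le_trans (expR_le1DxDsqr y1) _.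
  rewrite lerD2l -exprMn -real_normK ?num_real // lerXn2r // nnegrE.
  exact: le_trans (normr_ge0 _) lamf.
apply: le_trans (ler_avg quad) _.
by rewrite !avgD avgZ avgB !avg_cst // subrr mulr0 addr0 expR_ge1Dx.
Qed.

Lemma chernoff_bound (A : finType) (G : A -> R) (t lam : R) : 0 <= lam ->
  #|[set a | t <= G a]|%:R / #|A|%:R <=
    expR (- (lam * t)) * avg (fun a => expR (lam * G a)).
Proof.
move=> lam0; rewrite -avgZ /avg -sum1_card natr_sum big_mkcond /=.
rewrite ler_wpM2r ?invr_ge0 ?ler0n // ler_sum // => a _.
rewrite inE; case: ifP => [tG|_]; last by rewrite mulr_ge0 ?expR_ge0.
by rewrite -expRD -expR0 ler_expR addrC -mulrBr mulr_ge0 // subr_ge0.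
Qed.

End Average.

Section ProductSpace.
Variables (R : realType) (A : finType).
Hypothesis A0 : (0 < #|A|)%N.

Lemma card_ffun_gt0 n : (0 < #|{ffun 'I_n -> A}|)%N.
Proof. by rewrite card_ffun expn_gt0 A0. Qed.

Lemma avg_prod n (g : 'I_n -> A -> R) :
  avg (fun S : {ffun 'I_n -> A} => \prod_i g i (S i)) = \prod_i avg (g i).
Proof.
rewrite /avg -bigA_distr_bigA /= card_ffun card_ord natrX prodf_div.
by rewrite prodr_const card_ord.
Qed.

Lemma avg_coord n (f : A -> R) (i : 'I_n) :
  avg (fun S : {ffun 'I_n -> A} => f (S i)) = avg f.
Proof.
pose g j := if j == i then f else fun _ : A => 1.
have gE S : \prod_j g j (S j) = f (S i).
  by rewrite (bigD1 i) //= /g eqxx big1 ?mulr1 // => j /negbTE ->.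
under eq_fun do rewrite -gE.
rewrite avg_prod (bigD1 i) //= /g eqxx big1 ?mulr1 // => j /negbTE ->.
exact: avg_cst.
Qed.

Definition fcons n (x : A) (g : {ffun 'I_n -> A}) : {ffun 'I_n.+1 -> A} :=
  [ffun i => if unlift ord0 i is Some j then g j else x].

Lemma avg_fcons n (F : {ffun 'I_n.+1 -> A} -> R) :
  avg F = avg (fun x => avg (fun g => F (fcons x g))).
Proof.
have fcons_bij : bijective (fun p : A * {ffun 'I_n -> A} => fcons p.1 p.2).
  exists (fun S : {ffun 'I_n.+1 -> A} => (S ord0, [ffun j => S (lift ord0 j)])).
    move=> [x g] /=; congr (_, _); first by rewrite ffunE unlift_none.
    by apply/ffunP => j; rewrite !ffunE liftK.
  move=> S; apply/ffunP => i; rewrite ffunE.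
  by case: (unliftP ord0 i) => [j ->|->]; rewrite ?ffunE.
rewrite avg_pair /avg (reindex _ (onW_bij _ fcons_bij)) /=.
by rewrite !card_ffun card_prod card_ffun !card_ord expnS.
Qed.

Definition upd n (S : {ffun 'I_n -> A}) (i : 'I_n) (x : A) : {ffun 'I_n -> A} :=
  [ffun j => if j == i then x else S j].

Lemma fcons_upd n (x : A) (g : {ffun 'I_n -> A}) (j : 'I_n) (y : A) :
  fcons x (upd g j y) = upd (fcons x g) (lift ord0 j) y.
Proof.
apply/ffunP => i; rewrite !ffunE.
case: (unliftP ord0 i) => [i' ->|->]; rewrite ?ffunE.
  by rewrite (inj_eq (@lift_inj _ ord0)).
by rewrite (negbTE (neq_lift _ _)).
Qed.

Lemma fcons_upd0 n (x x' : A) (g : {ffun 'I_n -> A}) :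
  fcons x' g = upd (fcons x g) ord0 x'.
Proof.
by apply/ffunP => i; rewrite !ffunE; case: (unliftP ord0 i) => [i' ->|->]; rewrite ?ffunE.
Qed.

Definition bounded_diff n (c : R) (G : {ffun 'I_n -> A} -> R) :=
  forall S i x, `|G S - G (upd S i x)| <= c.

Lemma bounded_diff_fcons n c (G : {ffun 'I_n.+1 -> A} -> R) (x : A) :
  bounded_diff c G -> bounded_diff c (fun g => G (fcons x g)).
Proof. by move=> Gc g j y; rewrite fcons_upd. Qed.

Lemma bounded_diff_head n c (G : {ffun 'I_n.+1 -> A} -> R) :
  bounded_diff c G -> let H x := avg (fun g => G (fcons x g)) in
  forall x, `|H x - avg H| <= c.
Proof.
move=> Gc H x; rewrite -[H x](avg_cst _ A0) -avgB.
apply: ler_norm_avg => // x'; rewrite -avgB.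
by apply: ler_norm_avg => [|g]; rewrite ?card_ffun_gt0 // (fcons_upd0 x x').
Qed.

Lemma mcdiarmid_mgf n (G : {ffun 'I_n -> A} -> R) (c lam : R) :
  0 <= lam -> lam * c <= 1 -> bounded_diff c G ->
  avg (fun S => expR (lam * (G S - avg G))) <= expR (n%:R * (lam ^+ 2 * c ^+ 2)).
Proof.
move=> lam0 lamc; elim: n G => [|n IH] G Gc.
  have GE S : G S = avg G.
    rewrite -[LHS](avg_cst _ (card_ffun_gt0 0)); congr avg.
    by apply: funext => S'; congr G; apply/ffunP => -[].
  have -> : (fun S => expR (lam * (G S - avg G))) = fun _ => 1.
    by apply: funext => S; rewrite -(GE S) subrr mulr0 expR0.
  by rewrite avg_cst ?card_ffun_gt0 // mul0r expR0.
set H := fun x => avg (fun g => G (fcons x g)).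
have GH : avg G = avg H by rewrite avg_fcons.
have split_head x g : expR (lam * (G (fcons x g) - avg G)) =
    expR (lam * (H x - avg H)) * expR (lam * (G (fcons x g) - H x)).
  by rewrite -expRD -mulrDr GH; congr (expR (lam * _)); ring.
rewrite avg_fcons; under eq_fun do under eq_fun do rewrite split_head.
under eq_fun do rewrite avgZ.
apply: le_trans (_ : avg (fun x => expR (lam * (H x - avg H)) *
    expR (n%:R * (lam ^+ 2 * c ^+ 2))) <= _).
  apply: ler_avg => x; rewrite ler_wpM2l ?expR_ge0 //.
  exact/IH/bounded_diff_fcons.
under eq_fun do rewrite mulrC; rewrite avgZ.
rewrite -nat1r mulrDl mul1r expRD mulrC ler_wpM2r ?expR_ge0 //.
exact: avg_expR_centered_le (bounded_diff_head Gc).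
Qed.

Lemma mcdiarmid n (G : {ffun 'I_n -> A} -> R) (c t : R) :
  (0 < n)%N -> 0 < c -> 0 <= t <= 2 * n%:R * c -> bounded_diff c G ->
  #|[set S | t <= G S - avg G]|%:R / #|{ffun 'I_n -> A}|%:R <=
    expR (- (t ^+ 2 / (4 * n%:R * c ^+ 2))).
Proof.
move=> n0 c0 /andP[t0 tnc] Gc; have np : 0 < n%:R :> R by rewrite ltr0n.
pose lam := t / (2 * n%:R * c ^+ 2).
have lam0 : 0 <= lam by rewrite divr_ge0 // mulr_ge0 ?sqr_ge0 // mulr_ge0 ?ler0n.
have lamc : lam * c <= 1.
  rewrite /lam expr2 mulrA invfM mulrA -mulrA mulVf ?mulr1 ?gt_eqF //.
  by rewrite ler_pdivrMr ?mul1r // mulr_gt0 // mulr_gt0.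
apply: le_trans (chernoff_bound _ _ lam0) _.
apply: le_trans (ler_wpM2l (expR_ge0 _) (mcdiarmid_mgf lam0 lamc Gc)) _.
rewrite -expRD (_ : _ + _ = - (t ^+ 2 / (4 * n%:R * c ^+ 2))) //.
by rewrite /lam; field; rewrite ?gt_eqF.
Qed.

End ProductSpace.

Lemma sgnbN (R : realType) (b : bool) : sgnb R (~~ b) = - sgnb R b.
Proof. by case: b; rewrite /sgnb ?opprK. Qed.

Lemma normr_sgnb (R : realType) (b : bool) : `|sgnb R b| = 1.
Proof. by case: b; rewrite /sgnb ?normrN normr1. Qed.

Section Contraction.
Variables (R : realType) (W : Type) (w0 : W).

Lemma supr_two_point_contraction (rest a : W -> R) (phi : R -> R) (L M : R) (b : bool) :
  0 <= L -> (forall x y, phi x - phi y <= L * `|x - y|) ->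
  (forall w, `|a w| <= 1) -> (forall w, `|rest w| <= M) ->
  supr (fun w => sgnb R b * phi (a w) + rest w) +
    supr (fun w => sgnb R (~~ b) * phi (a w) + rest w) <=
  supr (fun w => sgnb R b * (L * a w) + rest w) +
    supr (fun w => sgnb R (~~ b) * (L * a w) + rest w).
Proof.
move=> L0 phiL a1 restM.
wlog -> : b / b = true.
  by case: b => [|] /(_ _ erefl) //; rewrite addrC [X in _ <= X]addrC.
rewrite /sgnb /=; apply: (supr_addr_le w0) => w w'.
have La v : `|L * a v| <= L by rewrite normrM ger0_norm // ler_piMr.
have up v : 1 * (L * a v) + rest v <= L + M.
  by move: (La v) (restM v); rewrite !ler_norml => /andP[? ?] /andP[? ?]; lra.
have un v : -1 * (L * a v) + rest v <= L + M.
  by move: (La v) (restM v); rewrite !ler_norml => /andP[? ?] /andP[? ?]; lra.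
have := supr_ub w up; have := supr_ub w' up; have := supr_ub w un; have := supr_ub w' un.
(* the sign of a w - a w' decides which of (w, w') and (w', w) to use on the right *)
by have := phiL (a w) (a w'); have [aw|aw] := lerP (a w') (a w); lra.
Qed.

Variables (n : nat) (u : 'I_n -> W -> R) (phi : R -> R) (L : R).
Hypotheses (L0 : 0 <= L) (u1 : forall i w, `|u i w| <= 1)
  (phi1 : forall t, `|phi t| <= 1)
  (phiL : forall x y, `|phi x - phi y| <= L * `|x - y|).

(* The first j coordinates are linearised: mixed_sum 0 is the phi-sum and
   mixed_sum n the linear one, and each step from j to j.+1 is a two-point
   contraction after pairing s with its flip at coordinate j. *)
Definition mixed_term (j : nat) (i : 'I_n) (w : W) : R :=
  if (i < j)%N then L * u i w else phi (u i w).

Definition mixed_sum (j : nat) (s : {ffun 'I_n -> bool}) (w : W) : R :=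
  \sum_i sgnb R (s i) * mixed_term j i w.

Lemma norm_mixed_sum_le j (s : {ffun 'I_n -> bool}) (P : pred 'I_n) w :
  `|\sum_(i | P i) sgnb R (s i) * mixed_term j i w| <= n%:R * (L + 1).
Proof.
apply: le_trans (ler_norm_sum _ _ _) _.
apply: le_trans (_ : \sum_(i | P i) (L + 1) <= _).
  apply: ler_sum => i _; rewrite normrM normr_sgnb mul1r /mixed_term; case: ifP => _.
    by rewrite normrM ger0_norm //; apply: le_trans (ler_wpM2l L0 (u1 i w)) _; rewrite mulr1 lerDl.
  by apply: le_trans (phi1 _) _; rewrite lerDr.
have Pn : (#|P| <= n)%N by rewrite -[n in (_ <= n)%N]card_ord max_card.
by rewrite sumr_const -[_ *+ #|_|]mulr_natl ler_wpM2r ?ler_nat // addr_ge0.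
Qed.

Definition flip (i0 : 'I_n) (s : {ffun 'I_n -> bool}) : {ffun 'I_n -> bool} :=
  [ffun i => if i == i0 then ~~ s i else s i].

Lemma flipK i0 : involutive (flip i0).
Proof.
by move=> s; apply/ffunP => i; rewrite !ffunE; case: eqP => // _; rewrite negbK.
Qed.

Lemma supr_mixed_sum_flip_le j (lt_jn : (j < n)%N) (s : {ffun 'I_n -> bool}) :
  supr (mixed_sum j s) + supr (mixed_sum j (flip (Ordinal lt_jn) s)) <=
  supr (mixed_sum j.+1 s) + supr (mixed_sum j.+1 (flip (Ordinal lt_jn) s)).
Proof.
set i0 := Ordinal lt_jn; pose rest w := \sum_(i | i != i0) sgnb R (s i) * mixed_term j i w.
have splitE j' (s' : {ffun 'I_n -> bool}) : (forall i, i != i0 -> s' i = s i) ->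
    (forall i, i != i0 -> mixed_term j' i = mixed_term j i) ->
    mixed_sum j' s' = fun w => sgnb R (s' i0) * mixed_term j' i0 w + rest w.
  move=> s's jj; apply: funext => w; rewrite /mixed_sum (bigD1 i0) //=.
  by congr (_ + _); apply: eq_bigr => i ii0; rewrite s's // jj.
have flip_off i : i != i0 -> flip i0 s i = s i by rewrite ffunE => /negbTE ->.
have term_off i : i != i0 -> mixed_term j.+1 i = mixed_term j i.
  move=> ii0; rewrite /mixed_term ltnS leq_eqVlt.
  by have -> : (nat_of_ord i == j) = false by apply: contraNF ii0 => /eqP ij; apply/eqP/val_inj.
rewrite !splitE // ffunE eqxx.
have -> : mixed_term j i0 = fun w => phi (u i0 w) by rewrite /mixed_term ltnn.
have -> : mixed_term j.+1 i0 = fun w => L * u i0 w by rewrite /mixed_term ltnSn.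
apply: supr_two_point_contraction => // [x y|w]; first exact: le_trans (ler_norm _) (phiL x y).
exact: norm_mixed_sum_le.
Qed.

Lemma avg_supr_mixed_sum_le j : (j < n)%N ->
  avg (fun s => supr (mixed_sum j s)) <= avg (fun s => supr (mixed_sum j.+1 s)).
Proof.
move=> lt_jn; set i0 := Ordinal lt_jn.
have twiceE (F : {ffun 'I_n -> bool} -> R) :
    2 * avg F = avg (fun s => F s + F (flip i0 s)).
  by rewrite avgD (reindex_avg F (can_inj (flipK i0))) mulr2n mulrDl mul1r.
rewrite -(ler_pM2l (ltr0Sn R 1)) !twiceE; apply: ler_avg => s.
exact: supr_mixed_sum_flip_le.
Qed.

Lemma contraction :
  avg (fun s : {ffun 'I_n -> bool} => supr (fun w => \sum_i sgnb R (s i) * phi (u i w))) <=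
  avg (fun s : {ffun 'I_n -> bool} => supr (fun w => \sum_i sgnb R (s i) * (L * u i w))).
Proof.
have -> : (fun s : {ffun 'I_n -> bool} => supr (fun w => \sum_i sgnb R (s i) * phi (u i w))) =
    (fun s => supr (mixed_sum 0 s)) by [].
have -> : (fun s : {ffun 'I_n -> bool} => supr (fun w => \sum_i sgnb R (s i) * (L * u i w))) =
    (fun s => supr (mixed_sum n s)).
  apply: funext => s; congr supr; apply: funext => w.
  by apply: eq_bigr => i _; rewrite /mixed_term ltn_ord.
suff mono j : (j <= n)%N ->
    avg (fun s => supr (mixed_sum 0 s)) <= avg (fun s => supr (mixed_sum j s)).
  exact: mono.
elim: j => // j IH lt_jn.
exact: le_trans (IH (ltnW lt_jn)) (avg_supr_mixed_sum_le lt_jn).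
Qed.

End Contraction.

Section Massart.
Variables (R : realType) (n : nat).

Definition rad_sum (b : 'I_n -> R) (s : {ffun 'I_n -> bool}) : R :=
  \sum_i sgnb R (s i) * b i.

Lemma avg_sgnb (c : R) : avg (fun x : bool => sgnb R x * c) = 0.
Proof. by rewrite /avg big_bool /sgnb /= mulN1r mul1r subrr mul0r. Qed.

Lemma avg_expR_rad_sum_le (b : 'I_n -> R) : (forall i, `|b i| <= 1) ->
  avg (fun s => expR (rad_sum b s)) <= expR (\sum_i b i ^+ 2).
Proof.
move=> b1; rewrite /rad_sum; under eq_fun do rewrite expR_sum.
rewrite (avg_prod (fun i x => expR (sgnb R x * b i))) expR_sum.
apply: ler_prod => i _; apply/andP; split.
  by rewrite /avg mulr_ge0 ?invr_ge0 ?ler0n ?sumr_ge0 // => x _; rewrite expR_ge0.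
have := @avg_expR_centered_le _ _ (fun x => sgnb R x * b i) `|b i| 1.
rewrite avg_sgnb card_bool expr1n mul1r real_normK ?num_real //.
under eq_fun do rewrite subr0 mul1r.
by rewrite mul1r; apply=> // x; rewrite subr0 normrM normr_sgnb mul1r.
Qed.

Variables (m : nat) (a : 'I_m -> 'I_n -> R) (lam : R).
Hypotheses (m0 : (0 < m)%N) (lam0 : 0 < lam) (lam1 : lam <= 1)
  (a1 : forall j i, `|a j i| <= 1).

Definition massart_potential (s : {ffun 'I_n -> bool}) : R :=
  \sum_j (expR (lam * rad_sum (a j) s) + expR (- (lam * rad_sum (a j) s))).

Lemma massart_potential_ge j s :
  expR (lam * `|rad_sum (a j) s|) <= massart_potential s.
Proof.
apply: le_trans (_ : expR (lam * rad_sum (a j) s) + expR (- (lam * rad_sum (a j) s)) <= _).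
  have [X0|X0] := leP 0 (rad_sum (a j) s).
    by rewrite ger0_norm // lerDl expR_ge0.
  by rewrite ltr0_norm // mulrN lerDr expR_ge0.
by rewrite /massart_potential (bigD1 j) //= lerDl sumr_ge0 // => i _; rewrite addr_ge0 ?expR_ge0.
Qed.

Lemma massart_potential_gt0 s : 0 < massart_potential s.
Proof. exact: lt_le_trans (expR_gt0 _) (massart_potential_ge (Ordinal m0) s). Qed.

Lemma avg_massart_potential_le :
  avg massart_potential <= 2 * m%:R * expR (n%:R * lam ^+ 2).
Proof.
have expR_le (c : R) j : `|c| = 1 ->
    avg (fun s => expR (c * (lam * rad_sum (a j) s))) <= expR (n%:R * lam ^+ 2).
  move=> c1; have ca i : `|c * lam * a j i| <= lam.
    by rewrite !normrM c1 mul1r (ger0_norm (ltW lam0)) ler_piMr ?(ltW lam0).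
  have -> : (fun s => expR (c * (lam * rad_sum (a j) s))) =
      fun s => expR (rad_sum (fun i => c * lam * a j i) s).
    apply: funext => s; rewrite /rad_sum !mulr_sumr; congr expR.
    by apply: eq_bigr => i _; ring.
  apply: le_trans (avg_expR_rad_sum_le (fun i => le_trans (ca i) lam1)) _.
  rewrite ler_expR mulr_natl -[n in _ *+ n]card_ord -sumr_const ler_sum // => i _.
  by rewrite -real_normK ?num_real // lerXn2r ?nnegrE ?normr_ge0 ?(ltW lam0) ?ca.
rewrite /massart_potential avg_sum.
apply: le_trans (_ : \sum_(j < m) (2 * expR (n%:R * lam ^+ 2)) <= _).
  apply: ler_sum => j _; rewrite avgD mulr2n mulrDl mul1r.
  apply: lerD.
    by under eq_fun do rewrite -[lam * _]mul1r; exact: expR_le (normr1 _).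
  by under eq_fun do rewrite -mulN1r; exact: expR_le (normrN1 _).
by rewrite sumr_const card_ord -[_ *+ m]mulr_natl mulrA [m%:R * 2]mulrC.
Qed.

Lemma massart :
  lam * avg (fun s => supr (fun j => `|rad_sum (a j) s|)) <=
    ln (2 * m%:R) + n%:R * lam ^+ 2.
Proof.
have m2 : 0 < 2 * m%:R :> R by rewrite mulr_gt0 // ltr0n.
have supr_le_ln s : lam * supr (fun j => `|rad_sum (a j) s|) <= ln (massart_potential s).
  rewrite -ler_pdivlMl //; apply: (supr_le (Ordinal m0)) => j.
  rewrite ler_pdivlMl // -ler_expR lnK ?posrE ?massart_potential_gt0 //.
  exact: massart_potential_ge.
rewrite -avgZ; apply: le_trans (ler_avg supr_le_ln) _.
rewrite -ler_expR expRD lnK ?posrE //.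
apply: le_trans (expR_avg_le _ _) _; first by rewrite card_ffun card_bool expn_gt0.
apply: le_trans avg_massart_potential_le.
by apply: ler_avg => s; rewrite lnK ?posrE ?massart_potential_gt0.
Qed.

End Massart.

Section Symmetrization.
Variables (R : realType) (A : finType) (W : Type) (w0 : W) (n : nat).
Variable f : W -> A -> R.
Hypotheses (A0 : (0 < #|A|)%N) (n0 : (0 < n)%N) (f01 : forall w x, 0 <= f w x <= 1).

Local Notation sampleT := {ffun 'I_n -> A}.
Local Notation signs := {ffun 'I_n -> bool}.

Definition risk (w : W) : R := avg (f w).

Definition emp_risk (S : sampleT) (w : W) : R := n%:R^-1 * \sum_i f w (S i).

Definition sup_dev (S : sampleT) : R := supr (fun w => risk w - emp_risk S w).

Definition signed_emp (s : signs) (S : sampleT) (w : W) : R :=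
  n%:R^-1 * \sum_i sgnb R (s i) * f w (S i).

Definition rademacher (S : sampleT) : R := avg (fun s => supr (signed_emp s S)).

Lemma signed_mean_le (s : signs) (g : 'I_n -> R) (c : R) :
  (forall i, `|g i| <= c) -> n%:R^-1 * \sum_i sgnb R (s i) * g i <= c.
Proof.
move=> gc; rewrite mulrC ler_pdivrMr ?ltr0n // mulrC.
apply: le_trans (ler_norm _) _; apply: le_trans (ler_norm_sum _ _ _) _.
rewrite mulr_natl -[n in _ *+ n]card_ord -sumr_const ler_sum // => i _.
by rewrite normrM normr_sgnb mul1r.
Qed.

Lemma norm_f_le1 w x : `|f w x| <= 1.
Proof. by have /andP[f0 f1] := f01 w x; rewrite ger0_norm. Qed.

Lemma norm_f_subr_le1 w x y : `|f w x - f w y| <= 1.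
Proof.
have /andP[? ?] := f01 w x; have /andP[? ?] := f01 w y.
by rewrite ler_norml; apply/andP; split; lra.
Qed.

Lemma risk_le1 w : risk w <= 1.
Proof.
rewrite /risk -(avg_cst 1 A0); apply: ler_avg => x.
by have /andP[] := f01 w x.
Qed.

Lemma emp_risk_ge0 S w : 0 <= emp_risk S w.
Proof.
rewrite /emp_risk mulr_ge0 ?invr_ge0 ?ler0n ?sumr_ge0 // => i _.
by have /andP[] := f01 w (S i).
Qed.

Lemma risk_sub_emp_risk_le1 S w : risk w - emp_risk S w <= 1.
Proof. by have := risk_le1 w; have := emp_risk_ge0 S w; lra. Qed.

Lemma risk_avg_emp_risk w : risk w = avg (fun S : sampleT => emp_risk S w).
Proof.
rewrite /emp_risk avgZ avg_sum.
under eq_bigr do rewrite (avg_coord A0 (f w)).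
by rewrite sumr_const card_ord -[avg _ *+ _]mulr_natl mulrA mulVf ?mul1r // pnatr_eq0 -lt0n.
Qed.

Lemma emp_risk_upd_le S i x w : `|emp_risk S w - emp_risk (upd S i x) w| <= n%:R^-1.
Proof.
rewrite /emp_risk -mulrBr normrM ger0_norm ?invr_ge0 ?ler0n //.
rewrite -[leRHS]mulr1 ler_wpM2l ?invr_ge0 ?ler0n //.
rewrite (bigD1 i) //= [X in _ - X](bigD1 i) //= /upd ffunE eqxx.
rewrite [X in _ - (_ + X)](eq_bigr (fun j => f w (S j))) => [|j /negbTE ji].
  by rewrite opprD addrACA subrr addr0 norm_f_subr_le1.
by rewrite ffunE ji.
Qed.

Lemma sup_dev_bounded_diff : bounded_diff n%:R^-1 sup_dev.
Proof.
have le_upd S S' : (forall w, emp_risk S' w - emp_risk S w <= n%:R^-1) ->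
    sup_dev S <= sup_dev S' + n%:R^-1.
  move=> SS'; apply: (supr_le w0) => w.
  by have := supr_ub w (risk_sub_emp_risk_le1 S'); have := SS' w; rewrite /sup_dev; lra.
move=> S i x; rewrite ler_norml; apply/andP; split.
  suff : sup_dev (upd S i x) <= sup_dev S + n%:R^-1 by lra.
  apply: le_upd => w; have := emp_risk_upd_le S i x w; rewrite ler_norml.
  by case/andP; lra.
suff : sup_dev S <= sup_dev (upd S i x) + n%:R^-1 by lra.
apply: le_upd => w; have := emp_risk_upd_le S i x w; rewrite ler_norml.
by case/andP; lra.
Qed.

Definition ghost_dev (s : signs) (p : sampleT * sampleT) (w : W) : R :=
  n%:R^-1 * \sum_i sgnb R (s i) * (f w (p.2 i) - f w (p.1 i)).

Definition swap_on (s : signs) (p : sampleT * sampleT) : sampleT * sampleT :=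
  ([ffun i => if s i then p.1 i else p.2 i], [ffun i => if s i then p.2 i else p.1 i]).

Definition negs (s : signs) : signs := [ffun i => ~~ s i].

Lemma swap_onK s : involutive (swap_on s).
Proof.
by move=> [S S']; congr (_, _); apply/ffunP => i; rewrite !ffunE; case: (s i).
Qed.

Lemma negsK : involutive negs.
Proof. by move=> s; apply/ffunP => i; rewrite !ffunE negbK. Qed.

Lemma ghost_dev_swap_on s p :
  ghost_dev [ffun=> true] (swap_on s p) = ghost_dev s p.
Proof.
apply: funext => w; congr (_ * _); apply: eq_bigr => i _; rewrite !ffunE /sgnb /=.
by case: (s i); rewrite ?mul1r ?mulN1r ?opprB.
Qed.

Lemma ghost_dev_le1 s p w : ghost_dev s p w <= 1.
Proof. by apply: signed_mean_le => i; exact: norm_f_subr_le1. Qed.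

Lemma signed_emp_le1 s S w : signed_emp s S w <= 1.
Proof. by apply: signed_mean_le => i; exact: norm_f_le1. Qed.

Lemma ghost_dev_ones S S' w :
  ghost_dev [ffun=> true] (S, S') w = emp_risk S' w - emp_risk S w.
Proof.
rewrite /ghost_dev /emp_risk -mulrBr -sumrB.
by under eq_bigr do rewrite ffunE mul1r.
Qed.

Lemma sup_dev_le_ghost S :
  sup_dev S <= avg (fun S' => supr (ghost_dev [ffun=> true] (S, S'))).
Proof.
apply: (supr_le w0) => w; rewrite risk_avg_emp_risk.
rewrite -[emp_risk S w](avg_cst _ (card_ffun_gt0 A0 n)) -avgB.
by apply: ler_avg => S'; rewrite -ghost_dev_ones; exact: supr_ub (ghost_dev_le1 _ _).
Qed.

Lemma supr_ghost_dev_le s p :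
  supr (ghost_dev s p) <= supr (signed_emp s p.2) + supr (signed_emp (negs s) p.1).
Proof.
apply: (supr_le w0) => w; apply: le_trans (lerD (supr_ub w (signed_emp_le1 s p.2))
  (supr_ub w (signed_emp_le1 (negs s) p.1))).
rewrite /ghost_dev /signed_emp -mulrDr -big_split /=.
by under [X in _ <= _ * X]eq_bigr do rewrite /negs ffunE sgnbN mulNr -mulrBr.
Qed.

Lemma symmetrization : avg sup_dev <= 2 * avg rademacher.
Proof.
have signs0 : (0 < #|signs|)%N by rewrite card_ffun_gt0 ?card_bool.
apply: le_trans (ler_avg sup_dev_le_ghost) _.
rewrite avg_pair -[leLHS](avg_cst _ signs0).
(* exchanging S i and S' i wherever s i is false preserves the uniform law of (S, S') *)
under eq_fun => s do rewrite -(reindex_avg _ (can_inj (swap_onK s))).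
under eq_fun do under eq_fun do rewrite ghost_dev_swap_on.
apply: le_trans (ler_avg (fun s => ler_avg (supr_ghost_dev_le s))) _.
under eq_fun do rewrite avgD.
rewrite avgD !(avg_exchange (fun s (p : sampleT * sampleT) => _)).
rewrite (avg_snd (fun S => avg (fun s => supr (signed_emp s S)))) ?card_ffun_gt0 //.
rewrite (avg_fst (fun S => avg (fun s => supr (signed_emp (negs s) S)))) ?card_ffun_gt0 //.
have -> : (fun S => avg (fun s => supr (signed_emp (negs s) S))) = rademacher.
  by apply: funext => S; exact: (reindex_avg (fun s => supr (signed_emp s S)) (can_inj negsK)).
by rewrite mulr2n mulrDl mul1r.
Qed.

End Symmetrization.

Section Ramp.
Variable R : realType.

Definition clamp01 (z : R) : R := if z <= 0 then 0 else if 1 <= z then 1 else z.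

Lemma clamp01_ge0 z : 0 <= clamp01 z.
Proof. by rewrite /clamp01; case: (lerP z 0) => // z0; case: (lerP 1 z) => //; lra. Qed.

Lemma clamp01_le1 z : clamp01 z <= 1.
Proof. by rewrite /clamp01; case: (lerP z 0) => // z0; case: (lerP 1 z) => //; lra. Qed.

Lemma clamp01_lipschitz u v : `|clamp01 u - clamp01 v| <= `|u - v|.
Proof.
have := ler_norm (u - v); have := ler_norm (v - u); rewrite distrC /clamp01 => ? ?.
case: (lerP u 0) => ?; case: (lerP 1 u) => ?; case: (lerP v 0) => ?;
  case: (lerP 1 v) => ? /=; by rewrite ler_norml; apply/andP; split; lra.
Qed.

Definition ramp (k t : R) : R := clamp01 (1 - k * t).

Lemma ramp_ge0 k t : 0 <= ramp k t.
Proof. exact: clamp01_ge0. Qed.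

Lemma ramp_le1 k t : ramp k t <= 1.
Proof. exact: clamp01_le1. Qed.

Lemma norm_ramp_le1 k t : `|ramp k t| <= 1.
Proof. by rewrite ger0_norm ?ramp_ge0 ?ramp_le1. Qed.

Lemma ramp_lipschitz k x y : 0 <= k -> `|ramp k x - ramp k y| <= k * `|x - y|.
Proof.
move=> k0; apply: le_trans (clamp01_lipschitz _ _) _.
by rewrite opprB addrC addrA subrK -mulrBr normrM ger0_norm // distrC.
Qed.

Lemma ramp_nonpos k t : 0 <= k -> t <= 0 -> ramp k t = 1.
Proof.
move=> k0 t0; have kt : k * t <= 0 by rewrite mulr_ge0_le0.
by rewrite /ramp /clamp01 ifF ?ifT //; [lra | apply/negbTE; rewrite -ltNge; lra].
Qed.

Lemma ramp_margin k t : 1 <= k * t -> ramp k t = 0.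
Proof. by move=> kt; rewrite /ramp /clamp01 ifT //; lra. Qed.

End Ramp.

Section L1Classifiers.
Variables (R : realType) (d : nat) (wstar : 'I_d -> R).

Definition l1margin (w : 'I_d -> R) (x : cube d) : R :=
  ystar wstar x * dot w x / l1norm w.

Lemma l1norm_ge0 (w : 'I_d -> R) : 0 <= l1norm w.
Proof. exact: sumr_ge0. Qed.

Lemma norm_dot_le (w : 'I_d -> R) x : `|dot w x| <= l1norm w.
Proof.
apply: le_trans (ler_norm_sum _ _ _) _; apply: ler_sum => i _.
by rewrite normrM normr_sgnb mulr1.
Qed.

Lemma norm_ystar_le1 x : `|ystar wstar x| <= 1.
Proof. by rewrite normr_sg; case: (_ != 0). Qed.

Lemma norm_l1margin_le1 w x : `|l1margin w x| <= 1.
Proof.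
rewrite /l1margin; have [->|w0] := eqVneq (l1norm w) 0.
  by rewrite invr0 mulr0 normr0.
have wp : 0 < l1norm w by rewrite lt0r w0 l1norm_ge0.
rewrite normrM normfV (gtr0_norm wp) ler_pdivrMr // mul1r normrM.
by rewrite -[leRHS]mul1r ler_pM ?norm_ystar_le1 ?norm_dot_le.
Qed.

Lemma dot_le_l1norm_supr (w x : 'I_d -> R) :
  \sum_j w j * x j <= l1norm w * supr (fun j => `|x j|).
Proof.
apply: le_trans (ler_norm _) _; apply: le_trans (ler_norm_sum _ _ _) _.
rewrite /l1norm mulr_suml ler_sum // => j _; rewrite normrM.
by apply: ler_wpM2l => //; apply: supr_ub_fin.
Qed.

Definition ramp_loss (k : R) (w : 'I_d -> R) (x : cube d) : R := ramp k (l1margin w x).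

Lemma ramp_loss_ge0_le1 k w x : 0 <= ramp_loss k w x <= 1.
Proof. by rewrite ramp_ge0 ramp_le1. Qed.

Definition label_feature n (S : sample d n) (j : 'I_d) (i : 'I_n) : R :=
  ystar wstar (S i) * sgnb R (S i j).

Lemma norm_label_feature_le1 n (S : sample d n) j i : `|label_feature S j i| <= 1.
Proof. by rewrite normrM normr_sgnb mulr1 norm_ystar_le1. Qed.

Lemma rad_sum_l1margin n (S : sample d n) (s : {ffun 'I_n -> bool}) k w :
  \sum_i sgnb R (s i) * (k * l1margin w (S i)) =
    k / l1norm w * \sum_j w j * rad_sum (label_feature S j) s.
Proof.
rewrite /rad_sum mulr_sumr; under [RHS]eq_bigr do rewrite !mulr_sumr.
rewrite [RHS]exchange_big /=; apply: eq_bigr => i _.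
rewrite /l1margin /dot mulr_sumr mulr_suml !mulr_sumr.
by apply: eq_bigr => j _; rewrite /label_feature; ring.
Qed.

Lemma supr_rad_sum_l1margin_le n (S : sample d n) (s : {ffun 'I_n -> bool}) k :
  (0 < d)%N -> 0 <= k ->
  supr (fun w => \sum_i sgnb R (s i) * (k * l1margin w (S i))) <=
    k * supr (fun j => `|rad_sum (label_feature S j) s|).
Proof.
move=> d0 k0; have supr0 : 0 <= supr (fun j => `|rad_sum (label_feature S j) s|).
  exact: le_trans (normr_ge0 _) (supr_ub_fin _ (Ordinal d0)).
apply: (supr_le (fun _ => 0)) => w; rewrite rad_sum_l1margin.
have [->|wn0] := eqVneq (l1norm w) 0; first by rewrite invr0 mulr0 mul0r mulr_ge0.
have wp : 0 < l1norm w by rewrite lt0r wn0 l1norm_ge0.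
rewrite -mulrA ler_wpM2l // mulrC ler_pdivrMr // mulrC.
exact: dot_le_l1norm_supr.
Qed.

Lemma rademacher_ramp_le n (S : sample d n) (k lam : R) :
  (0 < n)%N -> (0 < d)%N -> 0 <= k -> 0 < lam -> lam <= 1 ->
  rademacher (ramp_loss k) S <= k / (n%:R * lam) * (ln (2 * d%:R) + n%:R * lam ^+ 2).
Proof.
move=> n0 d0 k0 lam0 lam1; have n1 : 0 <= n%:R^-1 :> R by rewrite invr_ge0 ler0n.
have := massart d0 lam0 lam1 (@norm_label_feature_le1 _ S).
rewrite -ler_pdivlMl //; set B := ln _ + _ => massart_le.
have -> : k / (n%:R * lam) * B = n%:R^-1 * (k * (lam^-1 * B)) by rewrite invfM; ring.
have pull_n : rademacher (ramp_loss k) S <= n%:R^-1 * avg (fun s : {ffun 'I_n -> bool} =>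
    supr (fun w => \sum_i sgnb R (s i) * ramp_loss k w (S i))).
  rewrite -avgZ; apply: ler_avg => s; apply: (supr_mull_le (fun _ => 0) (M := n%:R)) => // w.
  rewrite -[leRHS]mulr1 -ler_pdivrMl ?ltr0n //.
  by apply: signed_mean_le => // i; exact: norm_ramp_le1.
apply: le_trans pull_n _; rewrite ler_wpM2l //.
apply: le_trans (contraction (fun _ => 0) k0 (fun i w => norm_l1margin_le1 w (S i))
  (@norm_ramp_le1 _ k) (fun x y => ramp_lipschitz x y k0)) _.
apply: le_trans (ler_avg (fun s => supr_rad_sum_l1margin_le S s d0 k0)) _.
by rewrite avgZ ler_wpM2l.
Qed.

End L1Classifiers.

Section Generalization.
Variables (R : realType) (d n : nat) (wstar : 'I_d -> R) (k : R).
Hypotheses (n0 : (0 < n)%N) (k0 : 0 <= k).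

Local Notation loss := (ramp_loss wstar k).
Local Notation dev := (sup_dev (n := n) loss).

Lemma card_cube_gt0 : (0 < #|{: cube d}|)%N.
Proof. by rewrite card_ffun card_bool expn_gt0. Qed.

Lemma test_error_le1 w : test_error wstar w <= 1.
Proof.
rewrite /test_error ler_pdivrMr ?mul1r ?ltr0n ?card_cube_gt0 // ler_nat.
exact: max_card.
Qed.

Lemma test_error_le_risk w : test_error wstar w <= risk loss w.
Proof.
rewrite /test_error /risk /avg -sum1_card natr_sum big_mkcond /=.
rewrite ler_wpM2r ?invr_ge0 ?ler0n // ler_sum // => x _.
rewrite inE; case: ifP => [yf|_]; last exact: ramp_ge0.
by rewrite /ramp_loss ramp_nonpos // /l1margin mulr_le0_ge0 ?invr_ge0 ?l1norm_ge0.
Qed.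

Lemma test_error_le_sup_dev (S : sample d n) w : 0 < k ->
  (forall i, k^-1 <= l1margin wstar w (S i)) -> test_error wstar w <= sup_dev loss S.
Proof.
move=> kp margin; have emp0 : emp_risk loss S w = 0.
  rewrite /emp_risk big1 ?mulr0 // => i _; rewrite /ramp_loss ramp_margin //.
  by rewrite -ler_pdivrMl // mulr1.
apply: le_trans (test_error_le_risk w) _.
have := supr_ub w (risk_sub_emp_risk_le1 card_cube_gt0 (@ramp_loss_ge0_le1 _ _ wstar k) S).
by rewrite emp0 subr0.
Qed.

Lemma avg_sup_dev_le (lam : R) : (0 < d)%N -> 0 < lam -> lam <= 1 ->
  n%:R * lam ^+ 2 = ln (2 * d%:R) -> avg dev <= 4 * k * lam.
Proof.
move=> d0 lam0 lam1 lamE; have np : 0 < n%:R :> R by rewrite ltr0n.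
apply: le_trans (symmetrization (fun _ => 0) card_cube_gt0 n0
  (@ramp_loss_ge0_le1 _ _ wstar k)) _.
apply: le_trans (_ : 2 * (k / (n%:R * lam) * (ln (2 * d%:R) + n%:R * lam ^+ 2)) <= _).
  rewrite ler_pM2l // -[leRHS](avg_cst _ (card_ffun_gt0 card_cube_gt0 n)).
  by apply: ler_avg => S; exact: rademacher_ramp_le.
rewrite -lamE (_ : 2 * _ = 4 * k * lam) //.
by field; rewrite !gt_eqF.
Qed.

Lemma avg_sup_dev_le_radius : (0 < d)%N -> 1 <= k ->
  4 * k * Num.sqrt (2 * ln (2 * d%:R) / n%:R) <= 1 ->
  avg dev <= 4 * k * Num.sqrt (2 * ln (2 * d%:R) / n%:R).
Proof.
move=> d0 k1 radius1; have np : 0 < n%:R :> R by rewrite ltr0n.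
have ln2d : 0 < ln (2 * d%:R) :> R.
  apply: ln_gt0; have : 1 <= d%:R :> R by rewrite ler1n.
  lra.
pose lam : R := Num.sqrt (ln (2 * d%:R) / n%:R).
have lam2 : n%:R * lam ^+ 2 = ln (2 * d%:R).
  by rewrite sqr_sqrtr ?divr_ge0 ?ler0n ?ltW // mulrC divfK // gt_eqF.
have lam0 : 0 < lam by rewrite sqrtr_gt0 divr_gt0.
have lam_radius : 4 * k * lam <= 4 * k * Num.sqrt (2 * ln (2 * d%:R) / n%:R).
  rewrite ler_wpM2l ?mulr_ge0 // ?(le_trans ler01 k1) // ler_wsqrtr //.
  by rewrite ler_wpM2r ?invr_ge0 ?ler0n //; lra.
have lam1 : lam <= 1 by nra.
exact: le_trans (avg_sup_dev_le d0 lam0 lam1 lam2) lam_radius.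
Qed.

Lemma sup_dev_deviation_le (t : R) : 0 <= t <= 2 ->
  #|[set S : sample d n | t <= dev S - avg dev]|%:R /
    #|{: sample d n}|%:R <= expR (- (t ^+ 2 * n%:R / 4)).
Proof.
move=> t02; have np : 0 < n%:R :> R by rewrite ltr0n.
have c0 : 0 < n%:R^-1 :> R by rewrite invr_gt0.
have := mcdiarmid card_cube_gt0 n0 c0 _
  (sup_dev_bounded_diff (fun _ => 0) card_cube_gt0 (@ramp_loss_ge0_le1 _ _ wstar k)).
rewrite mulfK ?gt_eqF // => /(_ t t02).
by rewrite expr2 !invfM !invrK; congr (_ <= expR (- _)); field; rewrite gt_eqF.
Qed.

End Generalization.

Section TeacherMargin.
Variables (R : realType) (d k : nat) (wstar : 'I_d -> R).
Hypotheses (k0 : (0 < k)%N) (kd : (k <= d)%N) (kodd : odd k)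
  (wstar_pm1 : forall i : 'I_d, (i < k)%N -> wstar i = 1 \/ wstar i = -1)
  (wstar_0 : forall i : 'I_d, (k <= i)%N -> wstar i = 0).

Lemma sum_lt_k : \sum_(i < d) ((i < k)%N)%:R = k%:R :> R.
Proof.
have head : \sum_(0 <= i < k) ((i < k)%N)%:R = k%:R :> R.
  rewrite big_nat_cond (eq_bigr (fun _ => 1)) => [|i /andP[/andP[_ ->]] //].
  by rewrite -big_nat_cond sumr_const_nat subn0.
have tail : \sum_(k <= i < d) ((i < k)%N)%:R = 0 :> R.
  by rewrite big_nat_cond big1 // => i /andP[/andP[ki _] _]; rewrite ltnNge ki.
by rewrite -(big_mkord xpredT (fun i => ((i < k)%N)%:R)) (big_cat_nat _ (n := k)) //= head tail addr0.
Qed.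

Lemma l1norm_wstar : l1norm wstar = k%:R.
Proof.
rewrite -sum_lt_k; apply: eq_bigr => i _.
have [ik|ki] := ltnP i k; last by rewrite wstar_0 // normr0.
by case: (wstar_pm1 ik) => ->; rewrite ?normrN normr1.
Qed.

Lemma dot_wstar_ge1 x : 1 <= `|dot wstar x|.
Proof.
(* <w*, x> = 2 N - k, where N counts the coordinates i < k on which w* and x agree *)
pose c (i : 'I_d) := (i < k)%N && (wstar i * sgnb R (x i) == 1).
have termE i : wstar i * sgnb R (x i) = 2 * (c i)%:R - ((i < k)%N)%:R.
  have [ik|ki] := ltnP i k; last by rewrite /c ltnNge ki wstar_0 // mul0r mulr0 subrr.
  have m1 : (-1 == 1 :> R) = false by apply/negbTE/eqP; lra.
  by rewrite /c ik; case: (wstar_pm1 ik) => ->; case: (x i);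
    rewrite /sgnb ?mulr1 ?mulrN1 ?opprK ?eqxx ?m1 /=; lra.
set N := (\sum_i (c i : nat))%N.
have -> : dot wstar x = (2 * N)%:R - k%:R.
  by rewrite /dot (eq_bigr _ (fun i _ => termE i)) sumrB -sum_lt_k -mulr_sumr natrM natr_sum.
have : (2 * N)%N != k by apply: contraTneq kodd => <-; rewrite mul2n odd_double.
case: ltngtP => // [lt2Nk|ltk2N] _.
  have : (2 * N).+1%:R <= k%:R :> R by rewrite ler_nat.
  by rewrite -natr1 => ?; rewrite ler0_norm; lra.
have : k.+1%:R <= (2 * N)%:R :> R by rewrite ler_nat.
by rewrite -natr1 => ?; rewrite ger0_norm; lra.
Qed.

Lemma max_l1_margin_ge n (S : sample d n) w : max_l1_margin wstar S w ->
  forall i, k%:R^-1 <= l1margin wstar w (S i).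
Proof.
move=> [_ wmax] i; have kp : 0 < k%:R :> R by rewrite ltr0n.
have wstar_nz : exists j, wstar j != 0.
  have d0 : (0 < d)%N := leq_trans k0 kd.
  exists (Ordinal d0); case: (wstar_pm1 (k0 : (Ordinal d0 < k)%N)) => ->.
    exact: oner_neq0.
  by rewrite oppr_eq0 oner_neq0.
have : ((k%:R^-1)%:E <= gamma1 wstar S wstar)%E.
  apply/bigmin_geP; split; first exact: leey.
  move=> j _; rewrite lee_fin l1norm_wstar /ystar -normrEsg.
  by rewrite -[X in X <= _]mul1r ler_wpM2r ?invr_ge0 ?ler0n // dot_wstar_ge1.
by move=> /le_trans /(_ (wmax _ wstar_nz)) /bigmin_geP [_ /(_ i isT)]; rewrite lee_fin.
Qed.

Lemma test_error_max_l1_margin_le n (S : sample d n) w : max_l1_margin wstar S w ->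
  test_error wstar w <= sup_dev (ramp_loss wstar k%:R) S.
Proof.
move=> wmax; apply: test_error_le_sup_dev; rewrite ?ler0n ?ltr0n //.
exact: max_l1_margin_ge.
Qed.

End TeacherMargin.

Lemma probS_all (R : realType) d n (E : sample d n -> Prop) :
  (forall S, E S) -> probS R E = 1.
Proof.
move=> allE; rewrite /probS (_ : [set S | _] = [set: sample d n]).
  by rewrite cardsT divff // pnatr_eq0 -lt0n card_ffun_gt0 // card_cube_gt0.
by apply/setP => S; rewrite !inE; apply/asboolP.
Qed.

Lemma probS_ge_compl (R : realType) d n (E : sample d n -> Prop)
    (P : pred (sample d n)) (delta : R) :
  (forall S, ~ E S -> P S) ->
  #|[set S | P S]|%:R / #|{: sample d n}|%:R <= delta -> 1 - delta <= probS R E.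
Proof.
move=> notE_P Pdelta; have N0 : 0 < #|{: sample d n}|%:R :> R.
  by rewrite ltr0n card_ffun_gt0 // card_cube_gt0.
have sub : ~: [set S | `[< E S >]] \subset [set S | P S].
  by apply/fintype.subsetP => S; rewrite !inE => /asboolPn; exact: notE_P.
have := subset_leq_card sub; rewrite -(ler_nat R) => le_card.
have cardE : #|{: sample d n}|%:R =
    #|[set S | `[< E S >]]|%:R + #|~: [set S | `[< E S >]]|%:R :> R.
  by rewrite -natrD cardsC.
rewrite ler_pdivrMr // in Pdelta; rewrite /probS ler_pdivlMr //.
move: Pdelta N0; rewrite cardE; nra.
Qed.

Lemma expR_deviation_le (R : realType) n (delta : R) : (0 < n)%N -> 0 < delta < 1 ->
  expR (- ((3 * Num.sqrt (ln (2 / delta) / (2 * n%:R))) ^+ 2 * n%:R / 4)) <= delta.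
Proof.
move=> n0 /andP[delta0 delta1]; have np : 0 < n%:R :> R by rewrite ltr0n.
have ln2d : 0 <= ln (2 / delta) by apply: ln_ge0; rewrite ler_pdivlMr //; lra.
rewrite exprMn sqr_sqrtr ?divr_ge0 ?mulr_ge0 ?ler0n //.
have -> : 3 ^+ 2 * (ln (2 / delta) / (2 * n%:R)) * n%:R / 4 = 9 / 8 * ln (2 / delta).
  by field; rewrite gt_eqF.
rewrite -[leRHS](lnK delta0) ler_expR ln_div ?posrE //.
have := ln_le0 (ltW delta1); have : 0 <= ln (2 : R) by rewrite ln_ge0 //; lra.
lra.
Qed.

Theorem theoremE3 (R : realType) (d n k : nat) (wstar : 'I_d -> R) (delta : R) :
  (0 < k)%N -> odd k -> (k <= d)%N -> (0 < n)%N ->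
  (forall i : 'I_d, (i < k)%N -> wstar i = 1 \/ wstar i = -1) ->
  (forall i : 'I_d, (k <= i)%N -> wstar i = 0) ->
  0 < delta < 1 ->
  1 - delta <=
  @probS R d n (fun S : sample d n =>
    forall w : 'I_d -> R, max_l1_margin wstar S w ->
      test_error wstar w <=
        4 * k%:R * Num.sqrt (2 * ln (2 * d%:R) / n%:R)
        + 3 * Num.sqrt (ln (2 / delta) / (2 * n%:R))).
Proof.
move=> k0 kodd kd n0 wstar_pm1 wstar_0 /andP[delta0 delta1].
set a := 4 * k%:R * _; set b := 3 * _.
have [ab|ab] := lerP 1 (a + b).
  rewrite probS_all ?lerBlDr ?lerDl ?ltW // => S w _.
  exact: le_trans (test_error_le1 _ _) ab.
have [a0 b0] : 0 <= a /\ 0 <= b by split; rewrite !mulr_ge0 ?sqrtr_ge0 ?ler0n.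
have mean_le : avg (sup_dev (n := n) (ramp_loss wstar k%:R)) <= a.
  apply: avg_sup_dev_le_radius; rewrite ?ler1n ?(leq_trans k0 kd) // -/a; lra.
apply: (probS_ge_compl (P := fun S =>
  b <= sup_dev (ramp_loss wstar k%:R) S - avg (sup_dev (n := n) (ramp_loss wstar k%:R)))).
  move=> S notE; rewrite leNgt; apply/negP => dev_small; apply: notE => w wmax.
  by have := test_error_max_l1_margin_le k0 kd kodd wstar_pm1 wstar_0 wmax; lra.
apply: le_trans (sup_dev_deviation_le wstar k%:R n0 _) (expR_deviation_le n0 _).
  by rewrite -/b b0 /=; lra.
by rewrite delta0.
Qed.
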